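(* Suppose a group $G$ is weakly hyperbolic relative to $\{A,B,C_1,\ldots,C_m\}$, where $A$ and $B$ are conjugate subgroups of $G$. Then $G$ is weakly hyperbolic relative to $\{A,C_1,\ldots,C_m\}$.
   Context: For a group $G$ and a collection $\mathcal H=\{H_1,\ldots,H_k\}$ of subgroups, $X\subset G$ is a relative generating set if $G$ is generated by $X\cup H_1\cup\cdots\cup H_k$; the relative Cayley graph is the Cayley graph of $G$ with respect to $X\cup H_1\cup\cdots\cup H_k$ with combinatorial metric; $G$ is weakly hyperbolic relative to $\mathcal H$ if for some finite relative generating set $X$ this relative Cayley graph is hyperbolic. *)

From Stdlib Require Import ZArith List.
Set Implicit Arguments.

Record Group := {
  carrier :> Type;
  gmul : carrier -> carrier -> carrier;
  gone : carrier;
  ginv : carrier -> carrier;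
  gmulA : forall x y z, gmul x (gmul y z) = gmul (gmul x y) z;
  gmul1l : forall x, gmul gone x = x;
  gmul1r : forall x, gmul x gone = x;
  gmulVl : forall x, gmul (ginv x) x = gone;
  gmulVr : forall x, gmul x (ginv x) = gone
}.

Arguments gmul {g}.
Arguments gone {g}.
Arguments ginv {g}.

Definition is_subgroup (G : Group) (H : G -> Prop) : Prop :=
  H gone /\ (forall x y, H x -> H y -> H (gmul x y)) /\
  (forall x, H x -> H (ginv x)).
Arguments is_subgroup {G}.

Definition conjugate_subgroups (G : Group) (A B : G -> Prop) : Prop :=
  exists g : G, forall x : G, B x <-> A (gmul g (gmul x (ginv g))).
Arguments conjugate_subgroups {G}.

Definition cay_adj (G : Group) (Sg : G -> Prop) (x y : G) : Prop :=
  exists s, Sg s /\ (y = gmul x s \/ x = gmul y s).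
Arguments cay_adj {G}.

Inductive cay_path (G : Group) (Sg : G -> Prop) : G -> G -> nat -> Prop :=
| cay_path0 : forall x, @cay_path G Sg x x 0
| cay_pathS : forall x y z n, @cay_adj G Sg x y -> @cay_path G Sg y z n ->
                              @cay_path G Sg x z (S n).
Arguments cay_path {G} Sg _ _ _.

Definition cay_dist (G : Group) (Sg : G -> Prop) (x y : G) (d : nat) : Prop :=
  cay_path Sg x y d /\ (forall n, cay_path Sg x y n -> d <= n).
Arguments cay_dist {G}.

(** Gromov hyperbolicity (four-point condition on Gromov products, written
    with doubled Gromov products 2(x|y)_w = d(x,w)+d(y,w)-d(x,y)):
    exists delta, (x|z)_w >= min((x|y)_w, (y|z)_w) - delta for all x,y,z,w. *)
Definition cay_hyperbolic (G : Group) (Sg : G -> Prop) : Prop :=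
  exists delta : nat,
    forall (x y z w : G) (dxy dxz dyz dxw dyw dzw : nat),
      cay_dist Sg x y dxy -> cay_dist Sg x z dxz -> cay_dist Sg y z dyz ->
      cay_dist Sg x w dxw -> cay_dist Sg y w dyw -> cay_dist Sg z w dzw ->
      (Z.of_nat dxw + Z.of_nat dzw - Z.of_nat dxz >=
       Z.min (Z.of_nat dxw + Z.of_nat dyw - Z.of_nat dxy)
             (Z.of_nat dyw + Z.of_nat dzw - Z.of_nat dyz)
       - 2 * Z.of_nat delta)%Z.
Arguments cay_hyperbolic {G}.

Definition rel_alphabet (G : Group) (X : list G) (Hs : list (G -> Prop))
  : G -> Prop :=
  fun s => In s X \/ exists H, In H Hs /\ H s.
Arguments rel_alphabet {G}.

Definition rel_generating (G : Group) (X : list G) (Hs : list (G -> Prop))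
  : Prop :=
  forall g : G, exists n, cay_path (rel_alphabet X Hs) gone g n.
Arguments rel_generating {G}.

Definition weakly_hyperbolic_rel (G : Group) (Hs : list (G -> Prop)) : Prop :=
  exists X : list G, rel_generating X Hs /\
                     cay_hyperbolic (rel_alphabet X Hs).

(* Adding the conjugator g to the finite relative generating set and dropping B
   changes word lengths by a bounded factor, since every b in B is g^-1 a g with
   a in A. So the two relative Cayley graphs are bi-Lipschitz equivalent, and
   hyperbolicity is a quasi-isometry invariant of geodesic graphs.

   For the invariance, let d be hyperbolic and d' bi-Lipschitz to it. A path
   that avoids the d-ball of radius D about a point of a d-geodesic has length
   exponential in D; going around the far point of a d-geodesic along a
   d'-geodesic with the same endpoints gives such a path of length O(D), so D is
   bounded (Morse lemma). Hence d'-geodesic triangles are uniformly thin, and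
   thin triangles give the four-point condition for d'. *)

From Stdlib Require Import ZArith List.
From Stdlib Require Import Arith Lia Classical ClassicalEpsilon.

Definition nat_dist (i j : nat) : nat := (i - j) + (j - i).

Lemma nat_least (P : nat -> Prop) n : P n -> exists m, P m /\ forall k, P k -> m <= k.
Proof.
  induction n as [n IH] using lt_wf_ind; intros Hn.
  destruct (classic (exists k, k < n /\ P k)) as [[k [Hk Pk]] | Hno].
  - exact (IH k Hk Pk).
  - exists n; split; [exact Hn|]. intros k Pk.
    apply Nat.nlt_ge; intros Hk. apply Hno; eauto.
Qed.

Lemma nat_exit_point (P : nat -> Prop) m :
  P 0 -> exists t, t <= m /\ P t /\ (t = m \/ ~ P (S t)).
Proof.
  intros H0; induction m as [|m [t [Ht [Pt [Em | Hexit]]]]].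
  - exists 0; auto.
  - subst t. destruct (classic (P (S m))); [exists (S m) | exists m]; auto.
  - exists t; auto.
Qed.

Lemma succ_sq_le_pow4 m : (m + 1) * (m + 1) <= 4 ^ m.
Proof. induction m; simpl; nia. Qed.

Lemma pow2_dominates_linear c : exists j0, forall j, j0 <= j -> c * (j + 2) < 2 ^ j.
Proof.
  exists (2 * (2 * c + 2)). intros j Hj. induction Hj as [|j Hj IH].
  - rewrite Nat.pow_mul_r. pose proof (succ_sq_le_pow4 (2 * c + 2)). simpl (2 ^ 2). nia.
  - rewrite Nat.pow_succ_r'. nia.
Qed.

(* At the least [k] with [a D <= 2^k] the hypothesis reads [D <= s + e log2 (2 a D)],
   which bounds [D]. *)
Lemma log_bound_bounded a s e : 1 <= a -> exists B, forall D,
  (forall k, a * D <= 2 ^ k -> D <= s + e * k) -> D <= B.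
Proof.
  intros Ha. destruct (pow2_dominates_linear (a * (s + e))) as [j0 Hj0].
  exists (s + e * j0). intros D HD.
  assert (Hex : a * D <= 2 ^ (a * D)) by (pose proof (Nat.pow_gt_lin_r 2 (a * D)); lia).
  destruct (nat_least (fun k => a * D <= 2 ^ k) _ Hex) as [[|j] [Hk Hmin]].
  - pose proof (HD 0 Hk). lia.
  - assert (Hlt : 2 ^ j < a * D) by (apply Nat.nle_gt; intros Hj; pose proof (Hmin j Hj); lia).
    pose proof (HD _ Hk) as HDk.
    destruct (Nat.lt_ge_cases j j0) as [Hj | Hj].
    + assert (e * S j <= e * j0) by nia. lia.
    + pose proof (Hj0 j Hj). nia.
Qed.

(** * Integer-valued metrics and the four-point condition *)

Definition metric {V} (d : V -> V -> nat) : Prop :=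
  (forall x, d x x = 0) /\ (forall x y, d x y = d y x) /\
  (forall x y z, d x z <= d x y + d y z).

Definition four_point {V} (d : V -> V -> nat) (δ : nat) : Prop := forall x y z w,
  d x z + d y w <= Nat.max (d x y + d z w) (d x w + d y z) + 2 * δ.

Definition geodesic_param {V} (d : V -> V -> nat) (f : nat -> V) (x y : V) : Prop :=
  f 0 = x /\ f (d x y) = y /\
  forall i j, i <= d x y -> j <= d x y -> d (f i) (f j) = nat_dist i j.

Definition geodesic_space {V} (d : V -> V -> nat) : Prop :=
  forall x y, exists f, geodesic_param d f x y.

Definition far_chain {V} (d : V -> V -> nat) (w : V) (r s : nat) (a b : V) (N : nat) :=
  exists f : nat -> V, f 0 = a /\ f N = b /\
    (forall k, k <= N -> r <= d w (f k)) /\ (forall k, k < N -> d (f k) (f (S k)) <= s).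

Definition thin_triangles {V} (d : V -> V -> nat) (τ : nat) : Prop :=
  forall x y z c1 c2 c3,
    geodesic_param d c1 x y -> geodesic_param d c2 y z -> geodesic_param d c3 x z ->
    forall j, j <= d x z -> exists i,
      (i <= d x y /\ d (c3 j) (c1 i) <= τ) \/ (i <= d y z /\ d (c3 j) (c2 i) <= τ).

Section Metric.
Context {V : Type} {d : V -> V -> nat} (Hmet : metric d).

Lemma d_refl x : d x x = 0. Proof. apply Hmet. Qed.
Lemma d_sym x y : d x y = d y x. Proof. apply Hmet. Qed.
Lemma d_tri x y z : d x z <= d x y + d y z. Proof. apply Hmet. Qed.

Lemma geodesic_param_dist f x y i :
  geodesic_param d f x y -> i <= d x y -> d x (f i) = i /\ d (f i) y = d x y - i.
Proof.
  intros [F0 [F1 F2]] Hi. pose proof (F2 0 i) as E0. pose proof (F2 i (d x y)) as E1.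
  rewrite F0 in E0. rewrite F1 in E1. unfold nat_dist in *. split; [rewrite E0|rewrite E1]; lia.
Qed.

Lemma geodesic_space_of_step :
  (forall x y, d x y = 0 -> x = y) ->
  (forall x y n, d x y = S n -> exists z, d x z = 1 /\ d z y = n) -> geodesic_space d.
Proof.
  intros H0 Hstep x y. remember (d x y) as n eqn:En. revert x y En.
  induction n as [|n IH]; intros x y En.
  - exists (fun _ => x). pose proof (H0 x y (eq_sym En)); subst y.
    unfold geodesic_param. rewrite <- En. repeat split.
    intros i j Hi Hj. unfold nat_dist; lia.
  - destruct (Hstep x y n (eq_sym En)) as [z [Hxz Hzy]].
    destruct (IH z y (eq_sym Hzy)) as [f Gf].
    pose proof Gf as [_ [F1 F2]]. rewrite Hzy in F1, F2.
    assert (Hx : forall j, j <= n -> d x (f j) = S j).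
    { intros j Hj. pose proof (geodesic_param_dist f z y j Gf ltac:(lia)).
      pose proof (d_tri x z (f j)). pose proof (d_tri x (f j) y). lia. }
    exists (fun i => match i with 0 => x | S i' => f i' end).
    unfold geodesic_param. rewrite <- En. repeat split; [exact F1|].
    intros [|i] [|j] Hi Hj; unfold nat_dist.
    + rewrite d_refl; lia.
    + rewrite Hx; lia.
    + rewrite d_sym, Hx; lia.
    + rewrite F2 by lia. unfold nat_dist; lia.
Qed.

Lemma far_chain_cat {w r s a b c N1 N2} :
  far_chain d w r s a b N1 -> far_chain d w r s b c N2 -> far_chain d w r s a c (N1 + N2).
Proof.
  intros [f [F0 [F1 [Fr Fs]]]] [g [G0 [G1 [Gr Gs]]]].
  exists (fun k => if k <=? N1 then f k else g (k - N1)). repeat split.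
  - exact F0.
  - destruct (Nat.leb_spec (N1 + N2) N1).
    + replace N2 with 0 in * by lia. rewrite Nat.add_0_r. congruence.
    + rewrite Nat.add_comm, Nat.add_sub. exact G1.
  - intros k Hk. destruct (Nat.leb_spec k N1); [apply Fr | apply Gr]; lia.
  - intros k Hk. destruct (Nat.leb_spec k N1), (Nat.leb_spec (S k) N1); try lia.
    + apply Fs; lia.
    + replace k with N1 by lia. rewrite F1, <- G0, Nat.sub_succ_l, Nat.sub_diag by lia.
      apply Gs; lia.
    + rewrite Nat.sub_succ_l by lia. apply Gs; lia.
Qed.

Lemma far_chain_rev {w r s a b N} : far_chain d w r s a b N -> far_chain d w r s b a N.
Proof.
  intros [f [F0 [F1 [Fr Fs]]]]. exists (fun k => f (N - k)). repeat split.
  - rewrite Nat.sub_0_r; exact F1.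
  - rewrite Nat.sub_diag; exact F0.
  - intros k Hk. apply Fr; lia.
  - intros k Hk. replace (N - k) with (S (N - S k)) by lia. rewrite d_sym. apply Fs; lia.
Qed.

Lemma far_chain_weaken {w r s s' a b N} :
  s <= s' -> far_chain d w r s a b N -> far_chain d w r s' a b N.
Proof.
  intros Hs [f [F0 [F1 [Fr Fs]]]]. exists f. repeat split; auto.
  intros k Hk. pose proof (Fs k Hk). lia.
Qed.

Lemma far_chain_of_geodesic (Hgeo : geodesic_space d) w r a b :
  r + d a b <= d w a -> far_chain d w r 1 a b (d a b).
Proof.
  intros Hr. destruct (Hgeo a b) as [ρ Gρ]. pose proof Gρ as [R0 [R1 R2]].
  exists ρ. repeat split; auto.
  - intros k Hk. pose proof (geodesic_param_dist ρ a b k Gρ Hk) as [Ek _].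
    pose proof (d_tri w (ρ k) a). rewrite (d_sym (ρ k) a) in *. lia.
  - intros k Hk. rewrite R2 by lia. unfold nat_dist; lia.
Qed.

Section FourPoint.
Context (δ : nat) (H4 : four_point d δ).

(* Dyadic subdivision: each halving costs [δ] in the Gromov product at [w]. *)
Lemma gromov_product_along_path w M (f : nat -> V) k : forall st N,
  1 <= N -> N <= 2 ^ k ->
  (forall i, st <= i < st + N -> d (f i) (f (S i)) + M <= d w (f i) + d w (f (S i))) ->
  d (f st) (f (st + N)) + M <= d w (f st) + d w (f (st + N)) + 2 * (δ * k).
Proof.
  induction k as [|k IH]; intros st N HN1 HN2 Hstep.
  - simpl in HN2. replace N with 1 by lia. rewrite Nat.add_1_r. pose proof (Hstep st). lia.
  - destruct (Nat.le_gt_cases N (2 ^ k)) as [Hsmall | Hbig].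
    + pose proof (IH st N HN1 Hsmall Hstep). nia.
    + rewrite Nat.pow_succ_r' in HN2. pose proof (Nat.pow_nonzero 2 k) as Hpos.
      pose proof (IH st (2 ^ k) ltac:(lia) (le_n _) ltac:(intros; apply Hstep; lia)) as I1.
      pose proof (IH (st + 2 ^ k) (N - 2 ^ k) ltac:(lia) ltac:(lia)
                     ltac:(intros; apply Hstep; lia)) as I2.
      replace (st + 2 ^ k + (N - 2 ^ k)) with (st + N) in I2 by lia.
      pose proof (H4 (f st) (f (st + 2 ^ k)) (f (st + N)) w) as Q.
      rewrite !(d_sym _ w) in Q. rewrite Nat.mul_succ_r. lia.
Qed.

Lemma far_chain_gromov w r s a b N k :
  far_chain d w r s a b N -> N <= 2 ^ k ->
  d a b + (2 * r - s) <= d w a + d w b + 2 * (δ * k).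
Proof.
  intros [f [F0 [F1 [Fr Fs]]]] Hk. subst a b. destruct N as [|N].
  - rewrite d_refl. pose proof (Fr 0). lia.
  - apply (gromov_product_along_path w (2 * r - s) f k 0 (S N)); [lia | exact Hk |].
    intros i Hi. pose proof (Fs i) as Hs. pose proof (Fr i) as Hi0. pose proof (Fr (S i)) as Hi1.
    pose proof (d_tri (f i) w (f (S i))) as T. rewrite (d_sym (f i) w) in T. lia.
Qed.

Lemma geodesic_near_gromov_product σ x y q : geodesic_param d σ x y ->
  exists t, t <= d x y /\ 2 * d q (σ t) + d x y <= d q x + d q y + 1 + 4 * δ.
Proof.
  intros Gσ. set (m := d x y).
  pose proof (d_tri x q y). pose proof (d_tri q x y). pose proof (d_tri x y q).
  pose proof (d_sym x q). pose proof (d_sym y q).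
  set (A := d x q + m - d q y). set (t := A / 2).
  assert (HtA : 2 * t <= A <= 2 * t + 1).
  { pose proof (Nat.div_mod A 2) as E. pose proof (Nat.mod_upper_bound A 2). unfold t. lia. }
  assert (Htm : t <= m) by (unfold A, m in *; lia).
  exists t. split; [exact Htm|].
  pose proof (geodesic_param_dist σ x y t Gσ Htm) as [E1 E2].
  pose proof (H4 q x (σ t) y). unfold A, m in *. lia.
Qed.

End FourPoint.
End Metric.

(** * Quasi-isometry invariance of hyperbolicity *)

Section ThinTriangles.
Context {V : Type} {d : V -> V -> nat} (Hmet : metric d) (Hgeo : geodesic_space d)
  (τ : nat) (Hthin : thin_triangles d τ).

(* Walk along [c] from [x] while staying [τ]-close to the side [[x, w]]; the
   exit point is also [τ]-close to the side [[w, z]]. *)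
Lemma geodesic_near_gromov_point x z w c : geodesic_param d c x z ->
  exists j, j <= d x z /\ d x z + 2 * d w (c j) <= d x w + d z w + 4 * τ + 2.
Proof.
  intros Gc. destruct (Hgeo x w) as [c1 G1]. destruct (Hgeo w z) as [c2 G2].
  pose proof G1 as [A0 _]. pose proof Gc as [C0 [C1 C2]].
  destruct (nat_exit_point (fun j => exists i, i <= d x w /\ d (c j) (c1 i) <= τ) (d x z))
    as [j [Hj [[i1 [Hi1 Hd1]] Hexit]]].
  { exists 0. split; [lia|]. rewrite C0, <- A0, (d_refl Hmet). lia. }
  exists j. split; [exact Hj|].
  pose proof (geodesic_param_dist c1 x w i1 G1 Hi1) as [E1 E1'].
  pose proof (geodesic_param_dist c x z j Gc Hj) as [E3 E3'].
  pose proof (d_tri Hmet x (c1 i1) (c j)). pose proof (d_tri Hmet (c j) (c1 i1) w).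
  pose proof (d_sym Hmet (c j) w). pose proof (d_sym Hmet (c1 i1) (c j)).
  pose proof (d_sym Hmet z w).
  destruct (Nat.eq_dec j (d x z)) as [Ej | Hne].
  { subst j. rewrite C1 in *. pose proof (d_tri Hmet (c1 i1) z w). lia. }
  destruct Hexit as [Ej | Hexit]; [lia|].
  destruct (Hthin x w z c1 c2 c G1 G2 Gc (S j)) as [i2 [[Hi2 Hd2] | [Hi2 Hd2]]]; [lia| |].
  - exfalso; apply Hexit; exists i2; auto.
  - pose proof (geodesic_param_dist c2 w z i2 G2 Hi2) as [E2 E2'].
    pose proof (C2 j (S j) Hj ltac:(lia)) as Ejj. unfold nat_dist in Ejj.
    pose proof (d_tri Hmet (c j) (c (S j)) (c2 i2)).
    pose proof (d_tri Hmet w (c2 i2) (c j)). pose proof (d_tri Hmet (c j) (c2 i2) z).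
    pose proof (d_sym Hmet (c2 i2) (c j)).
    lia.
Qed.

Lemma four_point_of_thin_triangles : four_point d (3 * τ + 1).
Proof.
  intros x y z w.
  destruct (Hgeo x y) as [c1 G1]. destruct (Hgeo y z) as [c2 G2]. destruct (Hgeo x z) as [c3 G3].
  destruct (geodesic_near_gromov_point x z w c3 G3) as [j [Hj Hp]].
  set (p := c3 j) in *.
  pose proof (d_sym Hmet z w). pose proof (d_sym Hmet y w). pose proof (d_sym Hmet x w).
  destruct (Hthin x y z c1 c2 c3 G1 G2 G3 j Hj) as [i [[Hi Hdi] | [Hi Hdi]]]; fold p in Hdi.
  - pose proof (geodesic_param_dist c1 x y i G1 Hi) as [E E'].
    pose proof (d_tri Hmet x (c1 i) w). pose proof (d_tri Hmet y (c1 i) w).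
    pose proof (d_tri Hmet w p (c1 i)). pose proof (d_sym Hmet w (c1 i)).
    pose proof (d_sym Hmet y (c1 i)).
    lia.
  - pose proof (geodesic_param_dist c2 y z i G2 Hi) as [E E'].
    pose proof (d_tri Hmet y (c2 i) w). pose proof (d_tri Hmet z (c2 i) w).
    pose proof (d_tri Hmet w p (c2 i)). pose proof (d_sym Hmet w (c2 i)).
    pose proof (d_sym Hmet z (c2 i)).
    lia.
Qed.

End ThinTriangles.

Section QuasiIsometric.
Context {V : Type} {d d' : V -> V -> nat} (K L δ : nat)
  (Hmet : metric d) (Hmet' : metric d') (Hgeo : geodesic_space d) (Hgeo' : geodesic_space d')
  (HK : forall x y, d x y <= K * d' x y) (HL : forall x y, d' x y <= L * d x y)
  (H4 : four_point d δ).

Lemma far_chain_along_quasi_geodesic (c : nat -> V) n q D i1 i2 :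
  (forall i j, i <= n -> j <= n -> d' (c i) (c j) = nat_dist i j) ->
  (forall i, i <= n -> D <= d q (c i)) -> i1 <= n -> i2 <= n ->
  far_chain d q D (Nat.max K 1) (c i1) (c i2) (nat_dist i1 i2).
Proof.
  intros Hc Hfar.
  assert (Hup : forall i j, i <= j -> j <= n ->
            far_chain d q D (Nat.max K 1) (c i) (c j) (j - i)).
  { intros i j Hij Hjn. exists (fun u => c (i + u)). repeat split.
    - now rewrite Nat.add_0_r.
    - f_equal; lia.
    - intros k Hk. apply Hfar; lia.
    - intros k Hk. pose proof (HK (c (i + k)) (c (i + S k))) as Hstep.
      rewrite Hc in Hstep by lia. unfold nat_dist in Hstep.
      replace (i + k - (i + S k) + (i + S k - (i + k))) with 1 in Hstep by lia. lia. }
  intros H1 H2. unfold nat_dist. destruct (Nat.le_ge_cases i1 i2).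
  - replace (i1 - i2 + (i2 - i1)) with (i2 - i1) by lia. apply Hup; lia.
  - replace (i1 - i2 + (i2 - i1)) with (i1 - i2) by lia. apply (far_chain_rev Hmet), Hup; lia.
Qed.

(* Stepping back [2D] along [σ] keeps the jump of length [<= D] to [c] outside
   the [D]-ball about [q]. *)
Lemma morse_entry_point (σ c : nat -> V) m n q t0 D :
  (forall t t', t <= m -> t' <= m -> d (σ t) (σ t') = nat_dist t t') ->
  σ 0 = c 0 -> t0 <= m -> q = σ t0 ->
  (forall t, t <= m -> exists i, i <= n /\ d (σ t) (c i) <= D) ->
  (forall i, i <= n -> D <= d q (c i)) ->
  exists t1 i1, t1 <= t0 /\ t0 - t1 <= 2 * D /\ i1 <= n /\ d (σ t1) (c i1) <= D /\
    far_chain d q D 1 (σ t1) (c i1) (d (σ t1) (c i1)).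
Proof.
  intros Hσ H0 Ht0 Hq Hcov Hfar. subst q.
  destruct (Nat.le_gt_cases (2 * D) t0).
  - destruct (Hcov (t0 - 2 * D)) as [i1 [Hi1 Hd1]]; [lia|].
    exists (t0 - 2 * D), i1. do 4 (split; [lia|]).
    apply (far_chain_of_geodesic Hmet Hgeo). rewrite Hσ by lia. unfold nat_dist; lia.
  - exists 0, 0. rewrite H0. pose proof (d_refl Hmet (c 0)). pose proof (Hfar 0).
    do 4 (split; [lia|]). apply (far_chain_of_geodesic Hmet Hgeo). lia.
Qed.

(* If [q = σ t0] is at distance [>= D] from all of [c], the detour around [q]
   through [c] is a far chain of length [O(D)] between two points of [σ] on
   either side of [q]. *)
Lemma morse_detour x y (c σ : nat -> V) t0 D k :
  geodesic_param d' c x y -> geodesic_param d σ x y -> t0 <= d x y ->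
  (forall t, t <= d x y -> exists i, i <= d' x y /\ d (σ t) (c i) <= D) ->
  (forall i, i <= d' x y -> D <= d (σ t0) (c i)) ->
  (6 * L + 2) * D <= 2 ^ k -> 2 * D <= Nat.max K 1 + 2 * (δ * k).
Proof.
  intros [C0 [C1 C2]] [S0 [S1 S2]] Ht0 Hcov Hfar Hk.
  set (n := d' x y) in *. set (m := d x y) in *.
  destruct (morse_entry_point σ c m n (σ t0) t0 D) as [t1 [i1 [Ht1 [Ht1' [Hi1 [Hd1 Ch1]]]]]];
    auto; [congruence|].
  destruct (morse_entry_point (fun t => σ (m - t)) (fun i => c (n - i)) m n (σ t0) (m - t0) D)
    as [t2 [i2 [Ht2 [Ht2' [Hi2 [Hd2 Ch3]]]]]]; auto.
  { intros t t' Ht Ht'. rewrite S2 by lia. unfold nat_dist; lia. }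
  { rewrite !Nat.sub_0_r. congruence. }
  { lia. }
  { f_equal; lia. }
  { intros t Ht. destruct (Hcov (m - t)) as [i [Hi Hdi]]; [lia|].
    exists (n - i). split; [lia|]. now replace (n - (n - i)) with i by lia. }
  { intros i Hi. apply Hfar; lia. }
  cbv beta in Hd2, Ch3.
  pose proof (far_chain_along_quasi_geodesic c n (σ t0) D i1 (n - i2) C2 Hfar Hi1
                ltac:(lia)) as Ch2.
  pose proof (far_chain_weaken (Nat.le_max_r K 1) Ch1) as Ch1'.
  pose proof (far_chain_rev Hmet (far_chain_weaken (Nat.le_max_r K 1) Ch3)) as Ch3'.
  pose proof (far_chain_cat Ch1' (far_chain_cat Ch2 Ch3')) as Ch.
  assert (Hgap : nat_dist i1 (n - i2) <= L * (6 * D)).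
  { rewrite <- C2 by lia. eapply Nat.le_trans; [apply HL|]. apply Nat.mul_le_mono_l.
    pose proof (d_tri Hmet (c i1) (σ t1) (c (n - i2))).
    pose proof (d_tri Hmet (σ t1) (σ (m - t2)) (c (n - i2))).
    pose proof (d_sym Hmet (c i1) (σ t1)). pose proof (d_sym Hmet (σ (m - t2)) (c (n - i2))).
    rewrite S2 in * by lia. unfold nat_dist in *. lia. }
  pose proof (far_chain_gromov Hmet δ H4 _ _ _ _ _ _ k Ch ltac:(lia)) as G.
  rewrite (S2 t1), (d_sym Hmet (σ t0)), (S2 t1), (S2 t0) in G by lia.
  unfold nat_dist in G. lia.
Qed.

Lemma geodesic_near_quasi_geodesic : exists D1, forall x y c σ,
  geodesic_param d' c x y -> geodesic_param d σ x y ->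
  forall t, t <= d x y -> exists i, i <= d' x y /\ d (σ t) (c i) <= D1.
Proof.
  destruct (log_bound_bounded (6 * L + 2) (Nat.max K 1) δ) as [B HB]; [lia|].
  exists B. intros x y c σ Gc Gσ.
  set (covers D := forall t, t <= d x y -> exists i, i <= d' x y /\ d (σ t) (c i) <= D).
  assert (Hcov : covers (d x y)).
  { intros t Ht. exists 0. split; [lia|]. destruct Gc as [C0 _].
    rewrite C0, (d_sym Hmet). pose proof (geodesic_param_dist σ x y t Gσ Ht). lia. }
  destruct (nat_least covers _ Hcov) as [D [HD Hmin]].
  enough (D <= B) by (intros t Ht; destruct (HD t Ht) as [i [? ?]]; exists i; split; lia).
  destruct D as [|D]; [lia|].
  assert (Hfar : exists t0, t0 <= d x y /\ forall i, i <= d' x y -> S D <= d (σ t0) (c i)).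
  { apply NNPP; intros Hno. enough (covers D) as HD' by (pose proof (Hmin D HD'); lia).
    intros t Ht. apply NNPP; intros Hnot. apply Hno. exists t. split; [exact Ht|].
    intros i Hi. apply Nat.nle_gt; intros Hle. apply Hnot. exists i; auto. }
  destruct Hfar as [t0 [Ht0 Hfar]].
  apply HB. intros k Hk.
  pose proof (morse_detour x y c σ t0 (S D) k Gc Gσ Ht0 HD Hfar Hk). lia.
Qed.

(* Take the last point [σ t] close to [c] before [c j]: the next point of [σ]
   is close to [c] beyond [c j], so [c j] lies on a short stretch of [c]. *)
Lemma quasi_geodesic_near_geodesic : exists D2, forall x y c σ,
  geodesic_param d' c x y -> geodesic_param d σ x y ->
  forall j, j <= d' x y -> exists t, t <= d x y /\ d (c j) (σ t) <= D2.
Proof.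
  destruct geodesic_near_quasi_geodesic as [D1 HA].
  exists (K * (L * (2 * D1 + 1)) + D1).
  intros x y c σ Gc Gσ j Hj. pose proof (HA x y c σ Gc Gσ) as Hnear.
  destruct Gc as [C0 [C1 C2]]. destruct Gσ as [S0 [S1 S2]].
  set (n := d' x y) in *. set (m := d x y) in *.
  destruct (nat_exit_point (fun t => exists i, i <= j /\ d (σ t) (c i) <= D1) m)
    as [t [Htm [[i1 [Hi1 Hd1]] Hexit]]].
  { exists 0. split; [lia|]. rewrite S0, <- C0, (d_refl Hmet). lia. }
  exists t. split; [exact Htm|].
  assert (Hbeyond : exists i2, j <= i2 <= n /\ d (c i1) (c i2) <= 2 * D1 + 1).
  { destruct (Nat.eq_dec t m) as [-> | Hne].
    - exists n. split; [lia|]. rewrite (d_sym Hmet), C1, <- S1. lia.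
    - destruct Hexit as [Ht | Hexit]; [lia|].
      destruct (Hnear (S t)) as [i2 [Hi2 Hd2]]; [lia|].
      exists i2. split.
      + split; [|lia]. apply Nat.nlt_ge; intros Hlt. apply Hexit. exists i2. split; [lia|auto].
      + pose proof (d_tri Hmet (c i1) (σ t) (c i2)).
        pose proof (d_tri Hmet (σ t) (σ (S t)) (c i2)).
        rewrite S2 in * by lia. pose proof (d_sym Hmet (c i1) (σ t)). unfold nat_dist in *. lia. }
  destruct Hbeyond as [i2 [Hi2 Hd12]].
  assert (Hji : d (c j) (c i1) <= K * (L * (2 * D1 + 1))).
  { eapply Nat.le_trans; [apply HK|]. apply Nat.mul_le_mono_l.
    pose proof (HL (c i1) (c i2)) as Hc12. rewrite !C2 in * by lia. unfold nat_dist in *.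
    pose proof (Nat.mul_le_mono_l _ _ L Hd12). lia. }
  pose proof (d_tri Hmet (c j) (c i1) (σ t)). rewrite (d_sym Hmet (c i1)) in *. lia.
Qed.

Lemma quasi_geodesic_gromov_product_small : exists D, forall x y c,
  geodesic_param d' c x y ->
  forall j, j <= d' x y -> d (c j) x + d (c j) y <= d x y + 2 * D.
Proof.
  destruct quasi_geodesic_near_geodesic as [D2 HB]. exists D2.
  intros x y c Gc j Hj. destruct (Hgeo x y) as [σ Gσ].
  destruct (HB x y c σ Gc Gσ j Hj) as [t [Ht Hdt]].
  pose proof (geodesic_param_dist σ x y t Gσ Ht) as [E1 E2].
  pose proof (d_tri Hmet (c j) (σ t) x). pose proof (d_tri Hmet (c j) (σ t) y).
  rewrite (d_sym Hmet (σ t) x) in *. lia.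
Qed.

Lemma quasi_geodesic_near_gromov_point : exists D, forall x y c,
  geodesic_param d' c x y ->
  forall q, exists i, i <= d' x y /\ 2 * d q (c i) + d x y <= d q x + d q y + D.
Proof.
  destruct geodesic_near_quasi_geodesic as [D1 HA]. exists (1 + 4 * δ + 2 * D1).
  intros x y c Gc q. destruct (Hgeo x y) as [σ Gσ].
  destruct (geodesic_near_gromov_product Hmet δ H4 σ x y q Gσ) as [t [Ht Hq]].
  destruct (HA x y c σ Gc Gσ t Ht) as [i [Hi Hdi]].
  exists i. split; [exact Hi|]. pose proof (d_tri Hmet q (σ t) (c i)). lia.
Qed.

Lemma quasi_geodesic_triangles_thin : exists τ, thin_triangles d' τ.
Proof.
  destruct quasi_geodesic_gromov_product_small as [D HS].
  destruct quasi_geodesic_near_gromov_point as [D' HP].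
  exists (L * (D + δ + D')).
  intros x y z c1 c2 c3 G1 G2 G3 j Hj. set (p := c3 j).
  pose proof (HS x z c3 G3 j Hj) as Hp. fold p in Hp.
  pose proof (H4 x y z p).
  pose proof (d_sym Hmet p x). pose proof (d_sym Hmet p y). pose proof (d_sym Hmet p z).
  assert (Hside : d p x + d p y <= d x y + 2 * D + 2 * δ \/
                  d p y + d p z <= d y z + 2 * D + 2 * δ) by lia.
  destruct Hside as [Hside | Hside];
    [destruct (HP x y c1 G1 p) as [i [Hi Hdi]] | destruct (HP y z c2 G2 p) as [i [Hi Hdi]]];
    exists i; [left | right]; split; auto;
    (eapply Nat.le_trans; [apply HL|]); apply Nat.mul_le_mono_l; lia.
Qed.

Lemma four_point_of_quasi_isometric : exists δ', four_point d' δ'.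
Proof.
  destruct quasi_geodesic_triangles_thin as [τ Hthin].
  exists (3 * τ + 1). exact (four_point_of_thin_triangles Hmet' Hgeo' τ Hthin).
Qed.

End QuasiIsometric.

(** * Relative Cayley graphs *)

Section CayleyGraph.
Context {G : Group} (Sg : G -> Prop).

Lemma cay_adj_sym x y : cay_adj Sg x y -> cay_adj Sg y x.
Proof. intros [s [Hs [E | E]]]; exists s; auto. Qed.

Lemma cay_path1 x y : cay_adj Sg x y -> cay_path Sg x y 1.
Proof. intros H. econstructor; [exact H | constructor]. Qed.

Lemma cay_path_cat x y z n m :
  cay_path Sg x y n -> cay_path Sg y z m -> cay_path Sg x z (n + m).
Proof. induction 1; intros; simpl; auto. econstructor; eauto. Qed.

Lemma cay_path_rev x y n : cay_path Sg x y n -> cay_path Sg y x n.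
Proof.
  induction 1 as [|a b c m Hab _ IH]; [constructor|].
  rewrite <- Nat.add_1_r. eapply cay_path_cat; [exact IH|]. apply cay_path1, cay_adj_sym, Hab.
Qed.

Lemma cay_adj_mull h x y : cay_adj Sg x y -> cay_adj Sg (gmul h x) (gmul h y).
Proof. intros [s [Hs [-> | ->]]]; exists s; split; auto; [left | right]; apply gmulA. Qed.

Lemma cay_path_mull h x y n : cay_path Sg x y n -> cay_path Sg (gmul h x) (gmul h y) n.
Proof. induction 1; econstructor; eauto using cay_adj_mull. Qed.

Lemma cay_connected_of_generating :
  (forall g : G, exists n, cay_path Sg gone g n) -> forall x y : G, exists n, cay_path Sg x y n.
Proof.
  intros Hgen x y. destruct (Hgen (gmul (ginv x) y)) as [n Hn]. exists n.
  apply (cay_path_mull x) in Hn. now rewrite gmul1r, gmulA, gmulVr, gmul1l in Hn.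
Qed.

Lemma cay_dist_exists :
  (forall g : G, exists n, cay_path Sg gone g n) ->
  exists d : G -> G -> nat, forall x y, cay_dist Sg x y (d x y).
Proof.
  intros Hgen.
  assert (Hex : forall x y, exists n, cay_dist Sg x y n).
  { intros x y. destruct (cay_connected_of_generating Hgen x y) as [n Hn].
    destruct (nat_least _ n Hn) as [m Hm]. exists m; exact Hm. }
  exists (fun x y => proj1_sig (constructive_indefinite_description _ (Hex x y))).
  intros x y. exact (proj2_sig (constructive_indefinite_description _ (Hex x y))).
Qed.

Section Distance.
Context (d : G -> G -> nat) (Hd : forall x y, cay_dist Sg x y (d x y)).

Lemma cay_dist_unique x y n : cay_dist Sg x y n -> n = d x y.
Proof.
  intros [P1 M1]. destruct (Hd x y) as [P2 M2]. pose proof (M1 _ P2). pose proof (M2 _ P1). lia.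
Qed.

Lemma cay_dist_path x y : cay_path Sg x y (d x y). Proof. apply Hd. Qed.
Lemma cay_dist_min x y n : cay_path Sg x y n -> d x y <= n. Proof. apply Hd. Qed.

Lemma cay_dist_metric : metric d.
Proof.
  repeat split.
  - intros x. pose proof (cay_dist_min x x 0 (cay_path0 G Sg x)). lia.
  - intros x y. apply Nat.le_antisymm; apply cay_dist_min, cay_path_rev, cay_dist_path.
  - intros x y z. apply cay_dist_min, cay_path_cat with y; apply cay_dist_path.
Qed.

Lemma cay_dist_geodesic : geodesic_space d.
Proof.
  apply (geodesic_space_of_step cay_dist_metric).
  - intros x y E. pose proof (cay_dist_path x y) as P. rewrite E in P. now inversion P.
  - intros x y n E. pose proof (cay_dist_path x y) as P. rewrite E in P.
    inversion P as [|? z ? ? Hxz Pzy]; subst. exists z.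
    pose proof (cay_dist_min _ _ _ (cay_path1 _ _ Hxz)). pose proof (cay_dist_min _ _ _ Pzy).
    pose proof (d_tri cay_dist_metric x z y).
    assert (d x z <> 0).
    { intros E0. assert (x = z) as <-.
      { pose proof (cay_dist_path x z) as P0. rewrite E0 in P0. now inversion P0. }
      lia. }
    lia.
Qed.

Lemma four_point_of_cay_hyperbolic : cay_hyperbolic Sg -> exists δ, four_point d δ.
Proof.
  intros [δ Hδ]. exists δ. intros x y z w.
  specialize (Hδ x y z w _ _ _ _ _ _ (Hd x y) (Hd x z) (Hd y z) (Hd x w) (Hd y w) (Hd z w)).
  lia.
Qed.

Lemma cay_hyperbolic_of_four_point δ : four_point d δ -> cay_hyperbolic Sg.
Proof.
  intros H4. exists δ. intros x y z w dxy dxz dyz dxw dyw dzw H1 H2 H3 H5 H6 H7.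
  apply cay_dist_unique in H1, H2, H3, H5, H6, H7. subst.
  pose proof (H4 x y z w). pose proof (d_sym cay_dist_metric z w).
  pose proof (d_sym cay_dist_metric y w). pose proof (d_sym cay_dist_metric x w).
  lia.
Qed.

End Distance.
End CayleyGraph.

Section LetterBound.
Context {G : Group} (S1 S2 : G -> Prop) (L : nat)
  (Hletter : forall s, S1 s -> exists k, k <= L /\ cay_path S2 gone s k).

Lemma cay_path_of_letter_bound x y n :
  cay_path S1 x y n -> exists k, k <= L * n /\ cay_path S2 x y k.
Proof.
  induction 1 as [x|x y z n Hxy _ [k [Hk P]]].
  - exists 0. split; [lia | constructor].
  - assert (Hedge : exists k, k <= L /\ cay_path S2 x y k).
    { destruct Hxy as [s [Hs Hxy]]. destruct (Hletter s Hs) as [k' [Hk' P']].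
      exists k'. split; [exact Hk'|].
      destruct Hxy as [-> | ->]; [|apply cay_path_rev];
        [apply (cay_path_mull _ x) in P' | apply (cay_path_mull _ y) in P'];
        now rewrite gmul1r in P'. }
    destruct Hedge as [k' [Hk' P']]. exists (k' + k). split; [lia|].
    eapply cay_path_cat; eauto.
Qed.

Lemma cay_generating_of_letter_bound :
  (forall g : G, exists n, cay_path S1 gone g n) -> forall g : G, exists n, cay_path S2 gone g n.
Proof.
  intros Hgen g. destruct (Hgen g) as [n P].
  destruct (cay_path_of_letter_bound _ _ _ P) as [k [_ P']]. eauto.
Qed.

Lemma cay_dist_le_of_letter_bound d1 d2 :
  (forall x y, cay_dist S1 x y (d1 x y)) -> (forall x y, cay_dist S2 x y (d2 x y)) ->
  forall x y, d2 x y <= L * d1 x y.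
Proof.
  intros Hd1 Hd2 x y.
  destruct (cay_path_of_letter_bound _ _ _ (cay_dist_path S1 d1 Hd1 x y)) as [k [Hk P]].
  pose proof (cay_dist_min S2 d2 Hd2 _ _ _ P). lia.
Qed.

End LetterBound.

Lemma cay_hyperbolic_of_letter_bounds {G : Group} (S1 S2 : G -> Prop) (K L : nat) :
  (forall g : G, exists n, cay_path S1 gone g n) ->
  (forall s, S1 s -> exists k, k <= L /\ cay_path S2 gone s k) ->
  (forall s, S2 s -> exists k, k <= K /\ cay_path S1 gone s k) ->
  cay_hyperbolic S1 -> cay_hyperbolic S2.
Proof.
  intros Hgen H12 H21 Hhyp.
  destruct (cay_dist_exists S1 Hgen) as [d1 Hd1].
  destruct (cay_dist_exists S2 (cay_generating_of_letter_bound S1 S2 L H12 Hgen)) as [d2 Hd2].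
  destruct (four_point_of_cay_hyperbolic S1 d1 Hd1 Hhyp) as [δ H4].
  destruct (four_point_of_quasi_isometric K L δ
              (cay_dist_metric S1 d1 Hd1) (cay_dist_metric S2 d2 Hd2)
              (cay_dist_geodesic S1 d1 Hd1) (cay_dist_geodesic S2 d2 Hd2)
              (cay_dist_le_of_letter_bound S2 S1 K H21 d2 d1 Hd2 Hd1)
              (cay_dist_le_of_letter_bound S1 S2 L H12 d1 d2 Hd1 Hd2) H4) as [δ' H4'].
  exact (cay_hyperbolic_of_four_point S2 d2 Hd2 δ' H4').
Qed.

Lemma rel_alphabet_letter_path {G : Group} (X : list G) (Hs : list (G -> Prop)) s :
  rel_alphabet X Hs s -> cay_path (rel_alphabet X Hs) gone s 1.
Proof. intros Hs1. apply cay_path1. exists s. split; [exact Hs1 | left; now rewrite gmul1l]. Qed.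

Lemma rel_alphabet_conj_letter_path {G : Group} (X : list G) (Hs : list (G -> Prop))
  (A : G -> Prop) (g a : G) :
  In A Hs -> A a -> cay_path (rel_alphabet (g :: X) Hs) gone (gmul (ginv g) (gmul a g)) 3.
Proof.
  intros HA Ha.
  assert (Hg : rel_alphabet (g :: X) Hs g) by (left; left; reflexivity).
  assert (Ha' : rel_alphabet (g :: X) Hs a) by (right; eauto).
  apply cay_pathS with (ginv g).
  { exists g. split; [exact Hg | right]. now rewrite gmulVl. }
  apply cay_pathS with (gmul (ginv g) a).
  { exists a. split; [exact Ha' | now left]. }
  apply cay_pathS with (gmul (ginv g) (gmul a g)); [|constructor].
  exists g. split; [exact Hg | left]. now rewrite gmulA.
Qed.

Lemma conj_alphabet_letter_bound (G : Group) (A B : G -> Prop) (Cs : list (G -> Prop))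
  (X : list G) (g : G) :
  (forall x : G, B x <-> A (gmul g (gmul x (ginv g)))) ->
  forall s, rel_alphabet X (A :: B :: Cs) s ->
  exists k, k <= 3 /\ cay_path (rel_alphabet (g :: X) (A :: Cs)) gone s k.
Proof.
  intros Hconj s [HX | [H [[<- | [<- | HC]] Hs]]].
  - exists 1. split; [lia|]. apply rel_alphabet_letter_path. left; right; exact HX.
  - exists 1. split; [lia|]. apply rel_alphabet_letter_path. right; exists A; simpl; auto.
  - exists 3. split; [lia|].
    replace s with (gmul (ginv g) (gmul (gmul g (gmul s (ginv g))) g)).
    + apply rel_alphabet_conj_letter_path with A; [now left | now apply Hconj].
    + rewrite !gmulA, gmulVl, gmul1l, <- !gmulA, gmulVl, gmul1r. reflexivity.
  - exists 1. split; [lia|]. apply rel_alphabet_letter_path. right; exists H; simpl; auto.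
Qed.

Lemma rel_alphabet_cons_letter_bound {G : Group} (X : list G) (Hs Hs' : list (G -> Prop))
  (g : G) n :
  (forall H, In H Hs -> In H Hs') -> cay_path (rel_alphabet X Hs') gone g n ->
  forall s, rel_alphabet (g :: X) Hs s ->
  exists k, k <= Nat.max 1 n /\ cay_path (rel_alphabet X Hs') gone s k.
Proof.
  intros Hsub Pg s [[<- | HX] | [H [HH Hs1]]].
  - exists n. split; [lia | exact Pg].
  - exists 1. split; [lia|]. apply rel_alphabet_letter_path. now left.
  - exists 1. split; [lia|]. apply rel_alphabet_letter_path. right; eauto.
Qed.

Theorem lemma3p4 (G : Group) (A B : G -> Prop) (Cs : list (G -> Prop)) :
  is_subgroup A -> is_subgroup B -> Forall (@is_subgroup G) Cs ->
  conjugate_subgroups A B ->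
  weakly_hyperbolic_rel G (A :: B :: Cs) ->
  weakly_hyperbolic_rel G (A :: Cs).
Proof.
  intros _ _ _ [g Hconj] [X [Hgen Hhyp]].
  destruct (Hgen g) as [n Pg].
  pose proof (conj_alphabet_letter_bound G A B Cs X g Hconj) as Hdown.
  assert (Hsub : forall H, In H (A :: Cs) -> In H (A :: B :: Cs))
    by (intros H [<- | HC]; simpl; auto).
  pose proof (rel_alphabet_cons_letter_bound X _ _ g n Hsub Pg) as Hup.
  exists (g :: X). split.
  - exact (cay_generating_of_letter_bound _ _ 3 Hdown Hgen).
  - exact (cay_hyperbolic_of_letter_bounds _ _ (Nat.max 1 n) 3 Hgen Hdown Hup Hhyp).
Qed.
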